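(* Suppose $\mathcal X=\hat{\mathcal X}$, $\Lambda(x,\hat x)\ge0$ for all $x,\hat x$ with equality if and only if $x=\hat x$, and $\Pi(x,z)>0$ for all $x,z$. Let $m=m_n$ with $0\le m_n\le\lfloor n/2\rfloor$ and $m_n=\Theta(n)$. Then for any sequence of $n$-block denoisers $\{\hat{\mathbf X}^n\}_{n\ge1}$ there exists $\mathbf x=(x_1,x_2,\dots)\in\mathcal X^\infty$ such that $$\limsup_{n\to\infty}E\big[L_{\hat{\mathbf X}^n}(x^n,Z^n)-D_{0,m_n}(x^n,Z^n)\big]>0.$$
   Context: Let $\mathcal X,\mathcal Z,\hat{\mathcal X}$ be finite alphabets and $\Pi=\{\Pi(x,z)\}$ a $|\mathcal X|\times|\mathcal Z|$ stochastic matrix (discrete memoryless channel) of full row rank. For deterministic $x^n$, the channel output $Z^n$ has independent components with $\Pr(Z_t=z)=\Pi(x_t,z)$. $\Lambda:\mathcal X\times\hat{\mathcal X}\to[0,\infty)$ is the loss. An $n$-block denoiser is $\hat{\mathbf X}^n=(\hat X_1,\dots,\hat X_n)$ with $\hat X_t:\mathcal Z^n\to\hat{\mathcal X}$, and $L_{\hat{\mathbf X}^n}(x^n,z^n)=\frac1n\sum_{t=1}^n\Lambda(x_t,\hat X_t(z^n))$. Let $\mathcal S$ be the set of all maps $\mathcal Z\to\hat{\mathcal X}$, $\mathcal S^n_{0,m}=\{(s_1,\dots,s_n)\in\mathcal S^n:\sum_{t=2}^n\mathbf 1_{\{s_{t-1}\ne s_t\}}\le m\}$, and $D_{0,m}(x^n,z^n)=\min_{(s_1,\dots,s_n)\in\mathcal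 S^n_{0,m}}\frac1n\sum_{t=1}^n\Lambda(x_t,s_t(z_t))$. *)

From HB Require Import structures.
From mathcomp Require Import all_boot all_order all_algebra.
From mathcomp Require Import reals.
Set Implicit Arguments. Unset Strict Implicit. Unset Printing Implicit Defensive.
Import Order.TTheory GRing.Theory Num.Theory.
Local Open Scope ring_scope.

Section Defs.
Variables (R : realType) (X Z : finType).

Definition chan_mx (Pi : X -> Z -> R) : 'M[R]_(#|X|, #|Z|) :=
  \matrix_(i < #|X|, j < #|Z|) Pi (enum_val i) (enum_val j).

Definition stochastic (Pi : X -> Z -> R) : Prop :=
  (forall x z, 0 <= Pi x z) /\ (forall x, \sum_(z : Z) Pi x z = 1).

Definition full_row_rank (Pi : X -> Z -> R) : Prop :=
  \rank (chan_mx Pi) = #|X|.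

(* Probability of the output block z^n given deterministic input x (indices 0..n-1
   of x correspond to x_1..x_n). *)
Definition chan_prob (Pi : X -> Z -> R) (x : nat -> X) (n : nat)
  (z : {ffun 'I_n -> Z}) : R :=
  \prod_(t < n) Pi (x t) (z t).

Definition expect (Pi : X -> Z -> R) (x : nat -> X) (n : nat)
  (f : {ffun 'I_n -> Z} -> R) : R :=
  \sum_(z : {ffun 'I_n -> Z}) chan_prob Pi x z * f z.

(* An n-block denoiser: hatX_t : Z^n -> Xhat for t < n (Xhat = X here). *)
Definition denoiser (n : nat) := 'I_n -> {ffun 'I_n -> Z} -> X.

Definition block_loss (Lam : X -> X -> R) (x : nat -> X) (n : nat)
  (dn : denoiser n) (z : {ffun 'I_n -> Z}) : R :=
  n%:R^-1 * \sum_(t < n) Lam (x t) (dn t z).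

Definition nswitches (n : nat) (s : {ffun 'I_n -> {ffun Z -> X}}) : nat :=
  (\sum_(t < n) \sum_(u < n) ((u.+1 == t :> nat) && (s u != s t)))%N.

Definition sw_cost (Lam : X -> X -> R) (x : nat -> X) (n : nat)
  (z : {ffun 'I_n -> Z}) (s : {ffun 'I_n -> {ffun Z -> X}}) : R :=
  n%:R^-1 * \sum_(t < n) Lam (x t) (s t (z t)).

(* D_{0,m}(x^n, z^n): minimum of sw_cost over S^n_{0,m} (a nonempty finite set
   whenever X is nonempty; the fold starts from a member of the set, so it is
   exactly the minimum). *)
Definition D0m (Lam : X -> X -> R) (m : nat) (x : nat -> X) (n : nat)
  (z : {ffun 'I_n -> Z}) : R :=
  match [pick s : {ffun 'I_n -> {ffun Z -> X}} | (nswitches s <= m)%N] with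
  | Some s0 => \big[Num.min/sw_cost Lam x z s0]_(s | (nswitches s <= m)%N)
                  sw_cost Lam x z s
  | None => 0
  end.

End Defs.

(* Fix letters a <> b and encode a bit sequence bt by the input that equals a or b on the
   whole block [jB, (j+1)B) according to bt j.  The genie's sequence "output x_t" switches
   only at block boundaries, so once B c1 >= 1 it lies in S_{0,m_n} and D_{0,m_n} = 0.
   Inputs that differ on a single block have output laws within a factor c^B, c = min Pi,
   so by Le Cam's two-point argument no denoiser is accurate at a time of that block under
   both; averaging over the free bits of a stage of length n = 2KB, whose first K blocks
   are already fixed, gives bits for which the expected loss is at least c^B lam / 4,
   where lam = min_e (Lam a e + Lam b e) > 0.
   Doubling K from stage to stage makes each stage extend the previous one, and a diagonal
   argument yields one input that is bad for every stage. *)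

From HB Require Import structures.
From mathcomp Require Import all_boot all_order all_algebra.
From mathcomp Require Import reals.
From mathcomp Require Import lra.
From Stdlib Require Import IndefiniteDescription.
Import Order.TTheory GRing.Theory Num.Theory.
Set Implicit Arguments. Unset Strict Implicit. Unset Printing Implicit Defensive.

Lemma card_le_injective (T : finType) (P : pred T) (f : T -> nat) (M : nat) :
  {in P &, injective f} -> (forall t, P t -> f t < M) -> #|P| <= M.
Proof.
move=> finj fM; rewrite cardE -(size_map f) -[M](size_iota 0).
apply: uniq_leq_size.
  by rewrite map_inj_in_uniq ?enum_uniq // => u v; rewrite !mem_enum; apply: finj.
by move=> y /mapP [t]; rewrite mem_enum mem_iota add0n => /fM ft ->.
Qed.

Lemma sum_nat_of_bool_card (T : finType) (P : pred T) : \sum_(t : T) P t = #|P|.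
Proof. by rewrite -sum1_card [RHS]big_mkcond; apply: eq_bigr => t _; rewrite unfold_in. Qed.

Lemma card_divn_eq n B j : 0 < B -> #|[pred t : 'I_n | t %/ B == j]| <= B.
Proof.
move=> B0; apply: (@card_le_injective _ _ (fun t : 'I_n => t %% B)); last first.
  by move=> t _; rewrite ltn_mod.
move=> u v /eqP hu /eqP hv huv; apply: val_inj.
by rewrite /= (divn_eq u B) (divn_eq v B) hu hv huv.
Qed.

Lemma nswitches_le_blocks (X Z : finType) n B K (s : {ffun 'I_n -> {ffun Z -> X}}) :
  0 < B -> n <= K * B -> (forall u t : 'I_n, u.+1 = t -> s u != s t -> B %| t) ->
  nswitches s <= K.
Proof.
move=> B0 hn hs; rewrite /nswitches.
apply: (@leq_trans (\sum_(t < n) (B %| t))).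
  apply: leq_sum => t _; case: (boolP (B %| t)) => Bt; last first.
    rewrite leqn0 sum_nat_eq0; apply/forallP => u; apply/implyP => _.
    by case: andP => //= -[/eqP hu /(hs _ _ hu)]; rewrite (negbTE Bt).
  apply: (@leq_trans (\sum_(u < n) (u.+1 == t))).
    by apply: leq_sum => u _; case: (u.+1 == t); case: (s u != s t).
  rewrite (sum_nat_of_bool_card (fun u : 'I_n => u.+1 == t)).
  apply: (@card_le_injective _ _ (fun=> 0)) => // u v /eqP hu /eqP hv _.
  by apply: val_inj; apply: succn_inj; rewrite hu hv.
rewrite (sum_nat_of_bool_card (fun t : 'I_n => B %| t)).
apply: (@card_le_injective _ _ (fun t : 'I_n => t %/ B)).
  by move=> u v hu hv huv; apply: val_inj; rewrite /= -(divnK hu) -(divnK hv) huv.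
by move=> t _; rewrite ltn_divLR // (leq_trans (ltn_ord t)).
Qed.

Lemma diagonal_limit (T : Type) (t0 : T) (K : nat -> nat) (P : nat -> (nat -> T) -> Prop) :
  (forall k, K k <= K k.+1) -> (forall k, k < K k.+1) ->
  (forall k f g, (forall j, j < K k.+1 -> f j = g j) -> P k f -> P k g) ->
  (forall k f0, exists2 f, (forall j, j < K k -> f j = f0 j) & P k f) ->
  exists f, forall k, P k f.
Proof.
move=> K_step k_lt P_prefix extend.
have K_homo : {homo K : k l / k <= l} by apply: homo_leq => //; apply: leq_trans.
have ext k f0 : {f | (forall j, j < K k -> f j = f0 j) /\ P k f}.
  by apply: constructive_indefinite_description; have [f] := extend k f0; exists f.
pose fs := fix fs k := if k is k'.+1 then sval (ext k (fs k')) else sval (ext 0 (fun=> t0)).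
pose prev k := if k is k'.+1 then fs k' else fun=> t0.
have fs_spec k : (forall j, j < K k -> fs k j = prev k j) /\ P k (fs k).
  by case: k => [|k]; [exact: (svalP (ext 0 _)) | exact: (svalP (ext k.+1 _))].
have fs_stable k d j : j < K k.+1 -> fs (k + d) j = fs k j.
  move=> hj; elim: d => [|d IH]; first by rewrite addn0.
  rewrite addnS (proj1 (fs_spec _)) ?IH //.
  by apply: leq_trans hj (K_homo _ _ _); rewrite ltnS leq_addr.
exists (fun j => fs j j) => k; apply: P_prefix (proj2 (fs_spec k)) => j hj.
case: (leqP j k) => hjk; first by rewrite -(subnKC hjk) fs_stable // subnKC.
by rewrite -(subnKC (ltnW hjk)) fs_stable // subnKC // ltnW.
Qed.

Section BlockSequences.
Variables (X Z : finType) (a b : X) (B : nat).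
Hypothesis B_gt0 : 0 < B.

Definition block_seq (bt : nat -> bool) (t : nat) : X := if bt (t %/ B) then a else b.

Definition extend_bits K (b0 : nat -> bool) (s : {ffun 'I_K -> bool}) (j : nat) : bool :=
  if j < K then b0 j else nth false (fgraph s) (j - K).

Definition flip_bit K (i : 'I_K) (s : {ffun 'I_K -> bool}) : {ffun 'I_K -> bool} :=
  [ffun j => (j == i) (+) s j].

Definition oracle_strategy n (x : nat -> X) : {ffun 'I_n -> {ffun Z -> X}} :=
  [ffun t : 'I_n => [ffun=> x t]].

Lemma flip_bitK K (i : 'I_K) : involutive (flip_bit i).
Proof. by move=> s; apply/ffunP => j; rewrite !ffunE addKb. Qed.

Lemma extend_bits_at K b0 (s : {ffun 'I_K -> bool}) (i : 'I_K) :
  extend_bits b0 s (K + i) = s i.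
Proof. by rewrite /extend_bits ltnNge leq_addr /= addKn nth_fgraph_ord. Qed.

Lemma extend_bits_flip K b0 (i : 'I_K) s j :
  extend_bits b0 (flip_bit i s) j != extend_bits b0 s j -> j = K + i.
Proof.
rewrite /extend_bits; case: ltnP => [|hKj]; first by rewrite eqxx.
have [hj|hj] := ltnP (j - K) K; last first.
  by rewrite !nth_default ?eqxx // size_tuple card_ord.
rewrite -[j - K]/(nat_of_ord (Ordinal hj)) !nth_fgraph_ord ffunE.
by case: (Ordinal hj =P i) => [<- _|_]; [rewrite /= subnKC | rewrite eqxx].
Qed.

Lemma block_seq_flip K b0 (i : 'I_K) s t :
  block_seq (extend_bits b0 (flip_bit i s)) t != block_seq (extend_bits b0 s) t ->
  t %/ B = K + i.
Proof.
move=> h; apply: (@extend_bits_flip _ b0 i s).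
by apply: contraNneq h; rewrite /block_seq => ->.
Qed.

Lemma card_block_seq_flip K b0 (i : 'I_K) s n :
  #|[pred t : 'I_n | block_seq (extend_bits b0 s) t !=
                     block_seq (extend_bits b0 (flip_bit i s)) t]| <= B.
Proof.
apply: leq_trans (card_divn_eq n (K + i) B_gt0); apply: subset_leq_card.
by apply/subsetP => t; rewrite !inE eq_sym => /block_seq_flip ->.
Qed.

Lemma block_seq_eq_prefix (bt bt' : nat -> bool) K t :
  (forall j, j < K -> bt j = bt' j) -> t < K * B -> block_seq bt t = block_seq bt' t.
Proof. by move=> h ht; rewrite /block_seq h // ltn_divLR. Qed.

Lemma nswitches_oracle_block_seq K (bt : nat -> bool) :
  nswitches (oracle_strategy (K * B) (block_seq bt)) <= K.
Proof.
apply: (nswitches_le_blocks B_gt0 (leqnn _)) => u t hut; apply: contraR => Bt.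
by apply/eqP/ffunP => z; rewrite !ffunE /block_seq -hut divnS // hut (negbTE Bt).
Qed.

End BlockSequences.

Local Open Scope ring_scope.

Section Averaging.
Variable R : realFieldType.

Lemma sum_ge_pairing (T : finType) (g : T -> T) (f : T -> R) (L : R) :
  injective g -> (forall s, L <= f s + f (g s)) -> #|T|%:R * L <= (\sum_s f s) *+ 2.
Proof.
move=> ginj hL; rewrite mulr2n {2}(reindex_inj ginj) -big_split /= mulr_natl -sumr_const.
exact: ler_sum.
Qed.

Lemma exists_ge_average (T : finType) (F : T -> R) (L : R) :
  (0 < #|T|)%N -> #|T|%:R * L <= \sum_s F s -> exists s, L <= F s.
Proof.
move=> T_gt0 hL; have [s0 _] := card_gt0P T_gt0.
have [s _ Fmax] := @arg_maxP _ _ _ s0 predT F isT.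
exists s; rewrite -(@ler_pM2l _ #|T|%:R) ?ltr0n //.
by apply: le_trans hL _; rewrite mulr_natl -sumr_const; apply: ler_sum => s' _; apply: Fmax.
Qed.

Lemma exists_pos_lower_bound (T : finType) (f : T -> R) :
  (forall t, 0 < f t) -> exists2 c, 0 < c & forall t, c <= f t.
Proof.
move=> fpos; exists (\big[Num.min/1]_t f t); last by move=> t; apply: bigmin_le.
by apply: (big_ind (fun w => 0 < w)) => // x y hx hy; rewrite lt_min hx hy.
Qed.

End Averaging.

Lemma exists_nat_mul_ge1 (R : archiRealFieldType) (x : R) :
  0 < x -> exists2 B : nat, (0 < B)%N & 1 <= x * B%:R.
Proof.
move=> x_gt0; exists (Num.Def.archi_bound x^-1).+1 => //.
rewrite -ler_pdivrMl // mulr1; apply: ltW; apply: lt_le_trans (archi_boundP _) _.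
  by rewrite invr_ge0 ltW.
by rewrite ler_nat.
Qed.

Section Channel.
Variables (R : realType) (X Z : finType) (Pi : X -> Z -> R).
Hypothesis Pi_stoch : stochastic Pi.

Lemma stochastic_le1 u v : Pi u v <= 1.
Proof.
have [Pi_ge0 Pi_sum1] := Pi_stoch; rewrite -(Pi_sum1 u) (bigD1 v) //= lerDl.
exact: sumr_ge0.
Qed.

Lemma chan_prob_ge0 (x : nat -> X) n (z : {ffun 'I_n -> Z}) : 0 <= chan_prob Pi x z.
Proof. by case: Pi_stoch => Pi_ge0 _; apply: prodr_ge0. Qed.

Lemma sum_chan_prob (x : nat -> X) n : \sum_(z : {ffun 'I_n -> Z}) chan_prob Pi x z = 1.
Proof.
case: Pi_stoch => _ Pi_sum1.
rewrite -(bigA_distr_bigA (fun (t : 'I_n) (z : Z) => Pi (x t) z)).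
by rewrite big1 // => t _; apply: Pi_sum1.
Qed.

Lemma ler_expect (x : nat -> X) n (f g : {ffun 'I_n -> Z} -> R) :
  (forall z, f z <= g z) -> expect Pi x f <= expect Pi x g.
Proof. by move=> fg; apply: ler_sum => z _; apply: ler_wpM2l; [apply: chan_prob_ge0|]. Qed.

Lemma chan_prob_change (c : R) (x y : nat -> X) n (z : {ffun 'I_n -> Z}) :
  0 <= c -> (forall u v, c <= Pi u v) ->
  c ^+ #|[pred t : 'I_n | x t != y t]| * chan_prob Pi x z <= chan_prob Pi y z.
Proof.
move=> c_ge0 hc; rewrite /chan_prob -prodr_const big_mkcond /= -big_split /=.
apply: ler_prod => t _; rewrite inE.
have Pi_ge0 u v : 0 <= Pi u v by apply: le_trans (hc u v).
case: eqP => [-> | _] /=; first by rewrite mul1r Pi_ge0 lexx.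
by rewrite mulr_ge0 //= (le_trans _ (hc _ _)) // ler_piMr // stochastic_le1.
Qed.

End Channel.

Section Loss.
Variables (R : realType) (X Z : finType) (Pi : X -> Z -> R) (Lam : X -> X -> R).
Hypotheses (Pi_stoch : stochastic Pi) (Lam_ge0 : forall u v, 0 <= Lam u v).

Definition expected_loss n (d : denoiser X Z n) (t : 'I_n) (x : nat -> X) : R :=
  expect Pi x (fun z => Lam (x t) (d t z)).

Definition regret n (d : denoiser X Z n) (m : nat) (x : nat -> X) : R :=
  expect Pi x (fun z => block_loss Lam x d z - D0m Lam m x z).

Lemma expected_loss_ge0 n (d : denoiser X Z n) t x : 0 <= expected_loss d t x.
Proof. by apply: sumr_ge0 => z _; rewrite mulr_ge0 ?chan_prob_ge0. Qed.

Lemma two_point_expected_loss (c lam : R) (B : nat) n (d : denoiser X Z n) (t : 'I_n)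
    (x y : nat -> X) :
  0 <= c -> (forall u v, c <= Pi u v) ->
  (#|[pred t : 'I_n | x t != y t]| <= B)%N ->
  (forall e, lam <= Lam (x t) e + Lam (y t) e) ->
  c ^+ B * lam <= expected_loss d t x + expected_loss d t y.
Proof.
move=> c_ge0 hc hB hlam.
rewrite -[c ^+ B * lam]mulr1 -(sum_chan_prob Pi_stoch x n) mulr_sumr -big_split /=.
apply: ler_sum => z _; have Px_ge0 := chan_prob_ge0 Pi_stoch x z.
have c_le1 : c <= 1 by apply: le_trans (hc (x t) (z t)) (stochastic_le1 Pi_stoch _ _).
have cB_ge0 : 0 <= c ^+ B by apply: exprn_ge0.
have Py_ge : c ^+ B * chan_prob Pi x z <= chan_prob Pi y z.
  apply: le_trans (chan_prob_change Pi_stoch _ _ _ c_ge0 hc); apply: ler_wpM2r => //.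
  exact: ler_wiXn2l.
apply: (@le_trans _ _ (c ^+ B * chan_prob Pi x z * (Lam (x t) (d t z) + Lam (y t) (d t z)))).
  by rewrite mulrAC ler_wpM2l ?mulr_ge0.
rewrite mulrDr; apply: lerD; apply: ler_wpM2r => //.
by rewrite ler_piMl // exprn_ile1.
Qed.

Lemma expect_block_loss x n (d : denoiser X Z n) :
  expect Pi x (block_loss Lam x d) = n%:R^-1 * \sum_t expected_loss d t x.
Proof.
rewrite /expect /block_loss exchange_big mulr_sumr; apply: eq_bigr => z _.
by rewrite mulrCA mulr_sumr.
Qed.

Lemma D0m_le_sw_cost m x n (z : {ffun 'I_n -> Z}) s :
  (nswitches s <= m)%N -> D0m Lam m x z <= sw_cost Lam x z s.
Proof.
move=> hs; rewrite /D0m; case: pickP => [s0 _|/(_ s)]; last by rewrite hs.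
exact: bigmin_le_cond.
Qed.

Lemma sw_cost_oracle x n (z : {ffun 'I_n -> Z}) :
  (forall u, Lam u u = 0) -> sw_cost Lam x z (oracle_strategy Z n x) = 0.
Proof. by move=> Lam_diag; rewrite /sw_cost big1 ?mulr0 // => t _; rewrite !ffunE. Qed.

Lemma regret_ge_expected_loss n (d : denoiser X Z n) m x :
  (forall u, Lam u u = 0) -> (nswitches (oracle_strategy Z n x) <= m)%N ->
  n%:R^-1 * \sum_t expected_loss d t x <= regret d m x.
Proof.
move=> Lam_diag hsw; rewrite -expect_block_loss; apply: ler_expect => // z.
rewrite lerDl oppr_ge0 -(sw_cost_oracle x z Lam_diag).
exact: D0m_le_sw_cost.
Qed.

Lemma regret_eq_prefix n (d : denoiser X Z n) m (x y : nat -> X) :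
  (forall t, (t < n)%N -> x t = y t) -> regret d m x = regret d m y.
Proof.
move=> xy; have xy_ord (t : 'I_n) : x t = y t by apply: xy.
have hsw (z : {ffun 'I_n -> Z}) s : sw_cost Lam x z s = sw_cost Lam y z s.
  by congr (_ * _); apply: eq_bigr => t _; rewrite xy_ord.
apply: eq_bigr => z _; congr (_ * (_ - _)).
- by apply: eq_bigr => t _; rewrite xy_ord.
- by congr (_ * _); apply: eq_bigr => t _; rewrite xy_ord.
rewrite /D0m; case: pickP => // s0 _.
by rewrite hsw; apply: eq_bigr => s _; rewrite hsw.
Qed.

End Loss.

Section Stage.
Variables (R : realType) (X Z : finType) (Pi : X -> Z -> R) (Lam : X -> X -> R).
Variables (a b : X) (B : nat) (c lam : R).
Hypotheses (Pi_stoch : stochastic Pi) (Lam_ge0 : forall u v, 0 <= Lam u v)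
  (Lam_diag : forall u, Lam u u = 0) (B_gt0 : (0 < B)%N)
  (c_ge0 : 0 <= c) (Pi_ge_c : forall u v, c <= Pi u v)
  (lam_le : forall e, lam <= Lam a e + Lam b e).

Let xs K b0 (s : {ffun 'I_K -> bool}) := block_seq a b B (extend_bits b0 s).

Lemma expected_loss_flip K (b0 : nat -> bool) (s : {ffun 'I_K -> bool}) (i : 'I_K) n
    (d : denoiser X Z n) (t : 'I_n) :
  (t %/ B = K + i)%N ->
  c ^+ B * lam <=
    expected_loss Pi Lam d t (xs b0 s) + expected_loss Pi Lam d t (xs b0 (flip_bit i s)).
Proof.
move=> ht; apply: two_point_expected_loss => //; first exact: card_block_seq_flip.
move=> e; rewrite /xs /block_seq ht !extend_bits_at ffunE eqxx.
by case: (s i) => /=; rewrite // addrC.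
Qed.

Lemma stage_expected_loss K (b0 : nat -> bool) (d : denoiser X Z (K * B + K * B)) :
  exists s : {ffun 'I_K -> bool},
    (K * B)%:R * (c ^+ B * lam) <= (\sum_t expected_loss Pi Lam d t (xs b0 s)) *+ 2.
Proof.
pose F (s : {ffun 'I_K -> bool}) :=
  \sum_(u < K * B) expected_loss Pi Lam d (rshift (K * B) u) (xs b0 s).
have hF :
    #|{ffun 'I_K -> bool}|%:R * ((K * B)%:R * (c ^+ B * lam)) <= \sum_s F s *+ 2.
  rewrite sumrMnl /F exchange_big -sumrMnl /= mulrCA mulr_natl.
  rewrite -[X in _ *+ X]card_ord -sumr_const.
  apply: ler_sum => u _; have u_lt : (u %/ B < K)%N by rewrite ltn_divLR.
  apply: (sum_ge_pairing (inv_inj (flip_bitK (Ordinal u_lt)))) => s.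
  by apply: expected_loss_flip; rewrite /= divnMDl.
have [|s hs] := exists_ge_average _ hF; first by rewrite card_ffun card_bool expn_gt0.
exists s; apply: le_trans hs _; rewrite ler_wMn2r // big_split_ord /= lerDr.
by apply: sumr_ge0 => t _; apply: expected_loss_ge0.
Qed.

Lemma stage_regret K m (b0 : nat -> bool) (d : denoiser X Z (K * B + K * B)) :
  (0 < K)%N -> (K + K <= m)%N ->
  exists s : {ffun 'I_K -> bool}, c ^+ B * lam / 4 <= regret Pi Lam d m (xs b0 s).
Proof.
move=> K_gt0 Km; have [s hs] := stage_expected_loss b0 d; exists s.
have hsw : (nswitches (oracle_strategy Z (K * B + K * B) (xs b0 s)) <= m)%N.
  have := nswitches_oracle_block_seq Z a b B_gt0 (K + K) (extend_bits b0 s).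
  by rewrite mulnDl => /leq_trans; apply.
apply: le_trans (regret_ge_expected_loss Pi_stoch d Lam_diag hsw).
have q_gt0 : 0 < (K * B)%:R :> R by rewrite ltr0n muln_gt0 K_gt0.
rewrite natrD ler_pdivlMl ?addr_gt0 //; rewrite mulr2n in hs.
set q := (K * B)%:R in hs q_gt0 *; nra.
Qed.

End Stage.

Definition stage_blocks N0 k := (2 ^ k * N0.+1)%N.

Lemma stage_blocks_gt N0 k : (N0 < stage_blocks N0 k)%N.
Proof. by rewrite /stage_blocks leq_pmull // expn_gt0. Qed.

Lemma stage_blocks_succ N0 k : stage_blocks N0 k.+1 = (stage_blocks N0 k + stage_blocks N0 k)%N.
Proof. by rewrite /stage_blocks expnS -mulnA mul2n addnn. Qed.

Section Adversary.
Variables (R : realType) (X Z : finType) (Pi : X -> Z -> R) (Lam : X -> X -> R).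
Variables (a b : X) (B : nat) (c lam c1 : R) (N0 : nat) (m : nat -> nat).
Hypotheses (Pi_stoch : stochastic Pi) (Lam_ge0 : forall u v, 0 <= Lam u v)
  (Lam_diag : forall u, Lam u u = 0) (B_gt0 : (0 < B)%N)
  (c_gt0 : 0 < c) (Pi_ge_c : forall u v, c <= Pi u v)
  (lam_gt0 : 0 < lam) (lam_le : forall e, lam <= Lam a e + Lam b e)
  (c1B : 1 <= c1 * B%:R) (m_lin : forall n, (N0 <= n)%N -> c1 * n%:R <= (m n)%:R).

Let K := stage_blocks N0.
Let len k := (K k * B + K k * B)%N.

Lemma stage_switches k : (K k + K k <= m (len k))%N.
Proof.
have N0_le : (N0 <= len k)%N.
  rewrite /len -mulnDl ltnW // (leq_trans (stage_blocks_gt N0 k)) //.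
  by rewrite (leq_trans _ (leq_pmulr _ B_gt0)) // leq_addr.
rewrite -(ler_nat R); apply: le_trans (m_lin N0_le).
by rewrite /len -mulnDl natrM mulrCA ler_peMr.
Qed.

Lemma adversary_bits (den : forall n, denoiser X Z n) :
  exists bt : nat -> bool, forall N, exists n, (N <= n)%N /\
    c ^+ B * lam / 8 < regret Pi Lam (den n) (m n) (block_seq a b B bt).
Proof.
have [bt hbt] : exists bt : nat -> bool, forall k,
    c ^+ B * lam / 8 < regret Pi Lam (den (len k)) (m (len k)) (block_seq a b B bt).
  apply: (diagonal_limit false (K := K)).
  - by move=> k; rewrite /K stage_blocks_succ leq_addr.
  - move=> k; rewrite /K /stage_blocks (ltn_trans (ltnSn k)) //.
    by rewrite (leq_trans (ltn_expl _ (ltnSn 1))) // leq_pmulr.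
  - move=> k bt bt' h; rewrite (@regret_eq_prefix _ _ _ _ _ _ _ _ _ (block_seq a b B bt')) //.
    by move=> t ht; apply: block_seq_eq_prefix h _ => //; rewrite /K stage_blocks_succ mulnDl.
  - move=> k b0.
    have [|s hs] := stage_regret Pi_stoch Lam_ge0 Lam_diag B_gt0 (ltW c_gt0) Pi_ge_c lam_le
      b0 (den (len k)) _ (stage_switches k).
      exact: leq_ltn_trans (stage_blocks_gt N0 k).
    exists (extend_bits b0 s); first by move=> j hj; rewrite /extend_bits hj.
    apply: lt_le_trans hs; have : 0 < c ^+ B * lam by rewrite mulr_gt0 ?exprn_gt0.
    lra.
exists bt => N; exists (len N); split; last exact: hbt.
rewrite /len /K /stage_blocks (leq_trans (ltnW (ltn_expl N (ltnSn 1)))) // (leq_trans (leq_pmulr _ (ltn0Sn N0))) //.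
by rewrite (leq_trans (leq_pmulr _ B_gt0)) ?leq_addr.
Qed.
End Adversary.

Unset Implicit Arguments. Set Strict Implicit. Set Printing Implicit Defensive.

Theorem theorem5 (R : realType) (X Z : finType) (Pi : X -> Z -> R)
  (Lam : X -> X -> R) (m : nat -> nat) :
  (1 < #|X|)%N ->
  stochastic Pi -> full_row_rank Pi ->
  (forall x z, 0 < Pi x z) ->
  (forall x xh, 0 <= Lam x xh) ->
  (forall x xh, Lam x xh = 0 <-> x = xh) ->
  (forall n, (m n <= n./2)%N) ->
  (exists c1 c2 : R, exists N : nat, 0 < c1 /\ 0 < c2 /\
     forall n, (N <= n)%N -> c1 * n%:R <= (m n)%:R /\ (m n)%:R <= c2 * n%:R) ->
  forall den : forall n, denoiser X Z n,
  exists x : nat -> X,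
    exists eps : R, 0 < eps /\
      forall N : nat, exists n : nat, (N <= n)%N /\
        eps < @expect R X Z Pi x n (fun z => block_loss Lam x (den n) z - D0m Lam (m n) x z).
Proof.
move=> X_gt1 Pi_stoch _ Pi_gt0 Lam_ge0 Lam_eq0 _ [c1 [c2 [N0 [c1_gt0 [_ m_lin]]]]] den.
have [a [b [_ _ ab]]] := card_gt1P X_gt1.
have [c c_gt0 Pi_ge_c] := exists_pos_lower_bound (fun p : X * Z => Pi_gt0 p.1 p.2).
have [lam lam_gt0 lam_le] : exists2 lam, 0 < lam & forall e, lam <= Lam a e + Lam b e.
  apply: exists_pos_lower_bound => e; rewrite lt_def addr_ge0 // andbT paddr_eq0 //.
  by apply: contra ab => /andP [/eqP /Lam_eq0 -> /eqP /Lam_eq0 ->].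
have [B B_gt0 c1B] := exists_nat_mul_ge1 c1_gt0.
have [bt hbt] := adversary_bits Pi_stoch Lam_ge0 (fun u => proj2 (Lam_eq0 u u) erefl)
  B_gt0 c_gt0 (fun u v => Pi_ge_c (u, v)) lam_gt0 lam_le c1B (fun n hn => proj1 (m_lin n hn)) den.
exists (block_seq a b B bt), (c ^+ B * lam / 8); split; last exact: hbt.
by rewrite divr_gt0 // mulr_gt0 // exprn_gt0.
Qed.
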